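(* Let $\sigma : \mathcal{S} \rightarrow \mathcal{A}$ and $\tau : \mathcal{T} \rightarrow \mathcal{A}^{\perp}$ be courteous strong-receptive pre-$\sim$-strategies. Then, forgetting polarities, the pullback of $\sigma$ and $\tau$ exists in the category of event structures with symmetry, has as base event structure the pullback $S \circledast T$ (in event structures) of $\sigma$ and $\tau$, and has as symmetry the pullback $\tilde{S}\circledast \tilde{T}$ (in event structures) of $\tilde\sigma$ and $\tilde\tau$, with the obvious projections.
   Context: $e \rightarrow e'$ denotes immediate causal dependency ($e<e'$ with nothing strictly between). An event structure with symmetry is an event structure $A$ with an event structure $\tilde A$ and open (rigid, with configuration extension property) jointly monic maps $l_A,r_A:\tilde A\to A$ forming an equivalence relation; maps must lift to symmetries ($\tilde f:\tilde A\to\tilde B$). The category of event structures with symmetry does not have all pullbacks in general; pullbacks of plain event structures always exist. An essp adds polarities. A pre-$\sim$-strategy is a map of essps; it is courteous if $s_1 \rightarrow s_2$ with $\mathrm{pol}(s_1)=+$ or $\mathrm{pol}(s_2)=-$ implies $\sigma s_1 \rightarrow \sigma s_2$, and strong-receptive if whenever $\theta\in\mathbb{S}_S$ and $\sigma\theta$ extends in the isomorphism family of the game by a pair $(a_1,a_2)$ of negative events, there is a unique extension $\theta\cup\{(s_1,s_2)\}\in\mathbb{S}_S$ with $\sigma s_i=a_i$. *)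

From Stdlib Require Import List.
Set Implicit Arguments.
Unset Strict Implicit.

Definition finite {E : Type} (X : E -> Prop) : Prop :=
  exists l : list E, forall e, X e <-> In e l.

Definition subset {E : Type} (X Y : E -> Prop) : Prop := forall e, X e -> Y e.
Definition same_set {E : Type} (X Y : E -> Prop) : Prop := forall e, X e <-> Y e.

Record ES : Type := mkES {
  ev : Type;
  le : ev -> ev -> Prop;
  con : (ev -> Prop) -> Prop;
  le_refl : forall e, le e e;
  le_trans : forall e1 e2 e3, le e1 e2 -> le e2 e3 -> le e1 e3;
  le_antisym : forall e1 e2, le e1 e2 -> le e2 e1 -> e1 = e2;
  le_fin : forall e, finite (fun e' => le e' e);
  con_fin : forall X, con X -> finite X;
  con_empty : con (fun _ => False);
  con_single : forall e, con (fun e' => e' = e);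
  con_sub : forall X Y, con X -> subset Y X -> con Y;
  con_down : forall X e e', con X -> X e' -> le e e' -> con (fun x => X x \/ x = e)
}.

Definition lt (E : ES) (e e' : ev E) : Prop := le e e' /\ e <> e'.
Definition imm (E : ES) (e e' : ev E) : Prop :=
  lt e e' /\ ~ (exists e'', lt e e'' /\ lt e'' e').

Definition config (E : ES) (x : ev E -> Prop) : Prop :=
  finite x /\ con x /\ (forall e e', x e' -> le e e' -> x e).

Definition image {A B : Type} (f : A -> B) (x : A -> Prop) : B -> Prop :=
  fun b => exists a, x a /\ f a = b.

Record esmap (A B : ES) : Type := mkEsmap {
  fn : ev A -> ev B;
  fn_conf : forall x, config x -> config (image fn x);
  fn_inj : forall x, config x -> forall e1 e2, x e1 -> x e2 -> fn e1 = fn e2 -> e1 = e2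
}.
Coercion fn : esmap >-> Funclass.

Definition rigid (A B : ES) (f : esmap A B) : Prop :=
  forall e e', le e e' -> le (f e) (f e').
Definition open_map (A B : ES) (f : esmap A B) : Prop :=
  rigid f /\
  forall (x : ev A -> Prop) (y' : ev B -> Prop), config x -> config y' ->
    subset (image f x) y' ->
    exists y, config y /\ subset x y /\ same_set (image f y) y'.

Definition jointly_monic (A At : ES) (l r : esmap At A) : Prop :=
  forall (C : ES) (g h : esmap C At),
    (forall c, l (g c) = l (h c)) -> (forall c, r (g c) = r (h c)) ->
    forall c, g c = h c.

(** The pair (l, r) forms an (internal) equivalence relation: for every
    object C, the relation on maps C -> A induced by (l, r) is an
    equivalence relation. *)
Definition related (A At : ES) (l r : esmap At A) (C : ES) (f g : esmap C A) : Prop :=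
  exists k : esmap C At, forall c, l (k c) = f c /\ r (k c) = g c.
Definition equiv_rel (A At : ES) (l r : esmap At A) : Prop :=
  forall C : ES,
    (forall f : esmap C A, related l r f f) /\
    (forall f g : esmap C A, related l r f g -> related l r g f) /\
    (forall f g h : esmap C A, related l r f g -> related l r g h -> related l r f h).

Definition is_symmetry (A At : ES) (l r : esmap At A) : Prop :=
  open_map l /\ open_map r /\ jointly_monic l r /\ equiv_rel l r.

Record ESS : Type := mkESS {
  base :> ES;
  symE : ES;
  sl : esmap symE base;
  sr : esmap symE base;
  sym_ok : is_symmetry sl sr
}.

Definition lifts (C Ct D Dt : ES) (lC rC : esmap Ct C) (lD rD : esmap Dt D)
  (f : esmap C D) (ft : esmap Ct Dt) : Prop :=
  forall e, lD (ft e) = f (lC e) /\ rD (ft e) = f (rC e).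
Definition has_lift (C Ct D Dt : ES) (lC rC : esmap Ct C) (lD rD : esmap Dt D)
  (f : esmap C D) : Prop :=
  exists ft : esmap Ct Dt, lifts lC rC lD rD f ft.

Definition in_iso (A : ESS) (th : ev A -> ev A -> Prop) : Prop :=
  exists xt, config xt /\
    forall a b, th a b <-> exists e, xt e /\ sl A e = a /\ sr A e = b.

(** Event structures with symmetry and polarity (true = +, false = -);
    polarity is preserved by symmetry. *)
Record ESSP : Type := mkESSP {
  ess :> ESS;
  pol : ev ess -> bool;
  pol_sym : forall e, pol (sl ess e) = pol (sr ess e)
}.
Arguments pol : clear implicits.

Definition dual (A : ESSP) : ESSP :=
  {| ess := ess A; pol := fun e => negb (pol A e);
     pol_sym := fun e => f_equal negb (@pol_sym A e) |}.

Definition pre_strategy (S A : ESSP) (s : esmap S A) (st : esmap (symE S) (symE A)) : Prop :=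
  lifts (sl S) (sr S) (sl A) (sr A) s st /\ forall e, pol A (s e) = pol S e.

Definition courteous (S A : ESSP) (s : esmap S A) : Prop :=
  forall s1 s2, imm s1 s2 -> (pol S s1 = true \/ pol S s2 = false) ->
    imm (s s1) (s s2).

Definition image2 {X Y : Type} (f : X -> Y) (th : X -> X -> Prop) : Y -> Y -> Prop :=
  fun a b => exists x1 x2, th x1 x2 /\ f x1 = a /\ f x2 = b.

Definition strong_receptive (S A : ESSP) (s : esmap S A) : Prop :=
  forall th : ev S -> ev S -> Prop, in_iso (A := S) th ->
  forall a1 a2 : ev A,
    in_iso (A := A) (image2 s th) ->
    ~ (exists b, image2 s th a1 b) ->
    in_iso (A := A) (fun a b => image2 s th a b \/ (a = a1 /\ b = a2)) ->
    pol A a1 = false -> pol A a2 = false ->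
    exists s1 s2,
      (~ (exists b, th s1 b) /\
       in_iso (A := S) (fun x y => th x y \/ (x = s1 /\ y = s2)) /\
       s s1 = a1 /\ s s2 = a2) /\
      forall t1 t2,
        ~ (exists b, th t1 b) ->
        in_iso (A := S) (fun x y => th x y \/ (x = t1 /\ y = t2)) ->
        s t1 = a1 -> s t2 = a2 -> t1 = s1 /\ t2 = s2.

Definition is_pullback (X Y Z P : ES) (f : esmap X Z) (g : esmap Y Z)
  (p1 : esmap P X) (p2 : esmap P Y) : Prop :=
  (forall e, f (p1 e) = g (p2 e)) /\
  forall (C : ES) (h1 : esmap C X) (h2 : esmap C Y),
    (forall c, f (h1 c) = g (h2 c)) ->
    exists k : esmap C P,
      ((forall c, p1 (k c) = h1 c) /\ (forall c, p2 (k c) = h2 c)) /\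
      forall k' : esmap C P,
        (forall c, p1 (k' c) = h1 c) -> (forall c, p2 (k' c) = h2 c) ->
        forall c, k' c = k c.

Definition ess_pullback (A S T : ESS) (s : esmap S A) (t : esmap T A)
  (P Pt : ES) (lP rP : esmap Pt P) (p1 : esmap P S) (p2 : esmap P T) : Prop :=
  is_symmetry lP rP /\
  has_lift lP rP (sl S) (sr S) p1 /\
  has_lift lP rP (sl T) (sr T) p2 /\
  (forall e, s (p1 e) = t (p2 e)) /\
  forall (C : ESS) (g : esmap C S) (h : esmap C T),
    has_lift (sl C) (sr C) (sl S) (sr S) g ->
    has_lift (sl C) (sr C) (sl T) (sr T) h ->
    (forall c, s (g c) = t (h c)) ->
    exists k : esmap C P,
      (has_lift (sl C) (sr C) lP rP k /\
       (forall c, p1 (k c) = g c) /\ (forall c, p2 (k c) = h c)) /\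
      forall k' : esmap C P,
        has_lift (sl C) (sr C) lP rP k' ->
        (forall c, p1 (k' c) = g c) -> (forall c, p2 (k' c) = h c) ->
        forall c, k' c = k c.

(** Apart from the openness of [lP] (and, symmetrically, of [rP]), everything
    follows from the universal properties of the two pullbacks [P] and [Pt]
    and the joint monicity of the symmetries.

    [lP] is rigid because, below any event, causality in [Pt] is generated by
    the causality of its projections [q1] and [q2].  For the extension
    property it suffices to extend a configuration [x] of [Pt] along one
    event [d] of [P].  If [p1 d] is positive, then [p2 d] is negative for
    [tau]: openness of the symmetry of [S] gives a partner [s2] of [p1 d], and
    strong receptivity of [tau] a partner [t2] of [p2 d] with the same image
    in [A]; the case [p1 d] negative is dual.  The two extended symmetries
    glue, by the pullback property of [Pt], into the required configuration. *)
From Stdlib Require Import List Classical ClassicalEpsilon ProofIrrelevance Relation_Operators Lia.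
Set Implicit Arguments.
Unset Strict Implicit.

Lemma finite_same {E} (X Y : E -> Prop) : finite X -> (forall e, X e <-> Y e) -> finite Y.
Proof. intros [l Hl] H. exists l. intro e. rewrite <- H. apply Hl. Qed.

Lemma finite_subset {E} (X Y : E -> Prop) : finite X -> (forall e, Y e -> X e) -> finite Y.
Proof.
  intros [l Hl] H.
  exists (filter (fun e => if excluded_middle_informative (Y e) then true else false) l).
  intro e. rewrite filter_In. destruct (excluded_middle_informative (Y e)); split; intros.
  - split; [apply Hl; auto | reflexivity].
  - auto.
  - contradiction.
  - destruct H0; discriminate.
Qed.

Lemma finite_add {E} (X : E -> Prop) d : finite X -> finite (fun e => X e \/ e = d).
Proof. intros [l Hl]. exists (d :: l). intro e. simpl. rewrite <- Hl. intuition. Qed.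

Lemma finite_image {A B} (f : A -> B) X : finite X -> finite (image f X).
Proof.
  intros [l Hl]. exists (map f l). intro b. rewrite in_map_iff. unfold image.
  split; intros [a [H1 H2]]; exists a; split; try apply Hl; auto.
Qed.

Section Configurations.
Variable E : ES.

Lemma config_finite (X : ev E -> Prop) : config X -> finite X.
Proof. intros [H _]; auto. Qed.

Lemma config_con (X : ev E -> Prop) : config X -> con X.
Proof. intros [_ [H _]]; auto. Qed.

Lemma config_down (X : ev E -> Prop) : config X -> forall e e', X e' -> le e e' -> X e.
Proof. intros [_ [_ H]]; eauto. Qed.

Lemma config_same (X Y : ev E -> Prop) : config X -> (forall e, X e <-> Y e) -> config Y.
Proof.
  intros [Hf [Hc Hd]] H. split; [|split].
  - eapply finite_same; eauto.
  - eapply con_sub; eauto. intros e He; apply H; auto.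
  - intros e e' H1 H2. apply H. apply H in H1. eauto.
Qed.

Lemma config_prime (e : ev E) : config (fun u => le u e).
Proof.
  split; [apply le_fin|split].
  - destruct (le_fin e) as [l Hl].
    assert (Hcon : forall l', (forall u, In u l' -> le u e) -> con (fun u => u = e \/ In u l')).
    { induction l' as [|a l' IH]; intros Hl'.
      - eapply con_sub. apply (con_single e). intros u [Hu|Hu]; auto; destruct Hu.
      - eapply con_sub. eapply con_down. apply IH. intros; apply Hl'; simpl; auto.
        left; reflexivity. apply Hl'; simpl; auto.
        intros u [Hu|[Hu|Hu]]; simpl; auto. }
    eapply con_sub. apply (Hcon l). intros; apply Hl; auto.
    intros u Hu. right. apply Hl; auto.
  - intros. eapply le_trans; eauto.
Qed.

End Configurations.

Lemma esmap_le_reflect (X Y : ES) (f : esmap X Y) x d d' :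
  config x -> x d -> x d' -> le (f d) (f d') -> le d d'.
Proof.
  intros Hx Hd Hd' Hle.
  pose proof (config_prime d') as Hp.
  assert (Hfd : image f (fun u => le u d') (f d)).
  { eapply config_down. apply (fn_conf f Hp). exists d'. split; auto. apply le_refl. auto. }
  destruct Hfd as [d'' [H1 H2]].
  assert (d'' = d) by (eapply (@fn_inj _ _ f _ Hx); eauto; eapply config_down; eauto).
  subst; auto.
Qed.

Definition esmap_comp {A B C : ES} (g : esmap B C) (f : esmap A B) : esmap A C.
Proof.
  refine (@mkEsmap A C (fun a => g (f a)) _ _).
  - intros x Hx. apply config_same with (image g (image f x)).
    + apply fn_conf, fn_conf, Hx.
    + intro c; unfold image; split.
      * intros [b [[a [Ha Hab]] Hbc]]; exists a; subst; auto.
      * intros [a [Ha Hac]]; exists (f a); split; [exists a; auto|auto].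
  - intros x Hx e1 e2 H1 H2 H. apply (@fn_inj _ _ f _ Hx); auto.
    apply (@fn_inj _ _ g _ (fn_conf f Hx)); [exists e1 | exists e2 |]; auto.
Defined.

Lemma finite_minimal (E : ES) (l : list (ev E)) (D : ev E -> Prop) :
  (forall d, D d -> In d l) -> forall d0, D d0 ->
  exists m, D m /\ forall d, D d -> le d m -> d = m.
Proof.
  revert D. induction l as [|a l IH]; intros D HD d0 Hd0.
  - destruct (HD d0 Hd0).
  - destruct (classic (exists d, D d /\ d <> a)) as [[d1 [Hd1 Hne]]|Hno].
    + destruct (IH (fun d => D d /\ d <> a)) with d1 as [m [[Hm Hma] Hmin]]; auto.
      { intros d [Hd Hda]. destruct (HD d Hd); auto. congruence. }
      destruct (classic (D a /\ le a m)) as [[Ha Ham]|Hn].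
      * exists a. split; auto. intros d Hd Hda.
        destruct (classic (d = a)) as [|Hne']; auto.
        assert (d = m) by (apply Hmin; auto; eapply le_trans; eauto). subst d.
        apply le_antisym; auto.
      * exists m. split; auto. intros d Hd Hdm.
        destruct (classic (d = a)) as [E'|Hne']. subst. exfalso; apply Hn; auto.
        apply Hmin; auto.
    + exists d0. split; auto. intros d Hd _.
      assert (d = a) by (apply NNPP; intro; apply Hno; eauto).
      assert (d0 = a) by (apply NNPP; intro; apply Hno; eauto). congruence.
Qed.

(* Configurations are finite and down-closed, so it is enough to add one
   causally minimal missing event at a time. *)
Lemma extension_of_one_step (E F : ES) (f : esmap E F) :
  (forall x d, config x -> ~ image f x d -> config (fun u => image f x u \/ u = d) ->
     exists x', config x' /\ subset x x' /\
                same_set (image f x') (fun u => image f x u \/ u = d)) ->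
  forall x y', config x -> config y' -> subset (image f x) y' ->
    exists y, config y /\ subset x y /\ same_set (image f y) y'.
Proof.
  intros Hstep x y' Hx Hy' Hsub.
  destruct (config_finite Hy') as [l Hl].
  assert (Hind : forall n (L : list (ev F)) x0, length L <= n -> config x0 ->
            subset (image f x0) y' -> (forall d, y' d -> ~ image f x0 d -> In d L) ->
            exists y, config y /\ subset x0 y /\ same_set (image f y) y').
  { induction n as [|n IH]; intros L x0 HL Hx0 Hs0 HLc;
      (destruct (classic (exists d0, y' d0 /\ ~ image f x0 d0)) as [[d0 [Hd0 Hnd0]]|Hno];
       [| exists x0; split; auto; split; [intros e He; auto
            | intro u; split; [apply Hs0| intros Hu; apply NNPP; intro; apply Hno; eauto]]]).
    - destruct L; [destruct (HLc d0 Hd0 Hnd0) | simpl in HL; lia].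
    - set (D := fun d => y' d /\ ~ image f x0 d /\ le d d0).
      destruct (@finite_minimal F L D) with d0 as [m [[Hm1 [Hm2 Hm3]] Hmin]].
      { intros d [H1 [H2 _]]. apply HLc; auto. }
      { split; [auto|split; [auto|apply le_refl]]. }
      assert (Hxm : config (fun u => image f x0 u \/ u = m)).
      { split; [|split].
        - apply finite_add, finite_image, (config_finite Hx0).
        - eapply con_sub. apply (config_con Hy').
          intros u [Hu|Hu]; [apply Hs0; auto | subst; auto].
        - intros e e' [He'|He'] Hle.
          + left. eapply config_down. apply (fn_conf f Hx0). exact He'. exact Hle.
          + subst e'. destruct (classic (image f x0 e)) as [He|He]; [left; auto|right].
            apply Hmin; [|exact Hle].
            split; [eapply (config_down Hy'); eauto
                   | split; [exact He | eapply le_trans; eauto]]. }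
      destruct (Hstep x0 m Hx0 Hm2 Hxm) as [x' [Hx' [Hsx Hsame]]].
      pose (dec := fun a b : ev F => excluded_middle_informative (a = b)).
      destruct (IH (remove dec m L) x') as [y [Hy [Hxy Hyy]]]; auto.
      + assert (length (remove dec m L) < length L)
          by (apply remove_length_lt; apply HLc; auto).
        lia.
      + intros u Hu. apply Hsame in Hu. destruct Hu as [Hu|Hu]; [apply Hs0; auto | subst; auto].
      + intros d Hd Hnd. apply in_in_remove.
        * intro Hdm; subst. apply Hnd. apply Hsame. right; auto.
        * apply HLc; auto. intro Hd'. apply Hnd. apply Hsame. left; auto.
      + exists y. split; auto. split; auto. intros e He. apply Hxy, Hsx, He. }
  apply (Hind (length l) l x); auto.
  intros d Hd _. apply Hl; auto.
Qed.
Lemma proj1_sig_inj {T} (Q : T -> Prop) (a b : sig Q) : proj1_sig a = proj1_sig b -> a = b.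
Proof.
  destruct a as [a Ha], b as [b Hb]; simpl; intro; subst. f_equal. apply proof_irrelevance.
Qed.

Lemma finite_sig {T} (Q : T -> Prop) : finite Q -> forall X : sig Q -> Prop, finite X.
Proof.
  intros [l Hl] X. apply finite_subset with (fun _ => True); auto.
  exists (flat_map (fun b => match excluded_middle_informative (Q b) with
                             | left H => exist Q b H :: nil | right _ => nil end) l).
  intro a. split; auto. intros _. apply in_flat_map. exists (proj1_sig a). split.
  - apply Hl, proj2_sig.
  - destruct (excluded_middle_informative (Q (proj1_sig a))) as [H|H].
    + left. apply proj1_sig_inj. reflexivity.
    + exfalso; apply H, proj2_sig.
Qed.

Section SubES.
Variables (E : ES) (Q : ev E -> Prop) (HQ : finite Q) (ord : sig Q -> sig Q -> Prop).
Hypothesis ord_refl : forall a, ord a a.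
Hypothesis ord_trans : forall a b c, ord a b -> ord b c -> ord a c.
Hypothesis ord_le : forall a b, ord a b -> le (proj1_sig a) (proj1_sig b).

Definition subES : ES.
Proof.
  refine (@mkES (sig Q) ord (fun X => con (image (@proj1_sig _ _) X))
            ord_refl ord_trans _ _ _ _ _ _ _).
  - intros a b H1 H2. apply proj1_sig_inj. apply le_antisym; auto.
  - intros; apply finite_sig; auto.
  - intros; apply finite_sig; auto.
  - eapply con_sub. apply con_empty. intros u [a [[] _]].
  - intros a. eapply con_sub. apply (con_single (proj1_sig a)).
    intros u [b [Hb Hu]]. subst; auto.
  - intros X Y H1 H2. eapply con_sub. apply H1. intros u [b [Hb Hu]]. exists b; auto.
  - intros X a b H1 H2 H3. eapply con_sub. eapply con_down. apply H1.
    exists b; split; eauto. apply ord_le; eauto.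
    intros u [c [[Hc|Hc] Hu]]; subst. left; exists c; auto. right; auto.
Defined.

Lemma subES_config_full : config Q -> config (E := subES) (fun _ => True).
Proof.
  intros HcQ. split; [apply finite_sig; auto|split].
  - simpl. eapply con_sub. apply (config_con HcQ). intros u [a [_ Hu]]; subst. apply proj2_sig.
  - auto.
Qed.

Definition subES_restrict (Z : ES) (f : esmap E Z) (HcQ : config Q)
  (Hf : forall a b, le (f (proj1_sig a)) (f (proj1_sig b)) -> ord a b) : esmap subES Z.
Proof.
  refine (@mkEsmap subES Z (fun a => f (proj1_sig a)) _ _).
  - intros x Hx. split; [|split].
    + apply finite_image. apply (config_finite Hx).
    + eapply con_sub. apply (config_con (fn_conf f HcQ)). intros w [a [Ha Hw]].
      exists (proj1_sig a). split; [apply proj2_sig | auto].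
    + intros w w' [b [Hb Hbw]] Hww. subst w'.
      assert (Hw' : image f Q w).
      { eapply config_down. apply (fn_conf f HcQ).
        exists (proj1_sig b); split; [apply proj2_sig|reflexivity]. auto. }
      destruct Hw' as [u [Hu Huw]].
      exists (exist Q u Hu). split; auto.
      eapply (config_down Hx). exact Hb. apply Hf. simpl. rewrite Huw. auto.
  - intros x Hx e1 e2 H1 H2 H. apply proj1_sig_inj.
    apply (@fn_inj _ _ f _ HcQ); auto; apply proj2_sig.
Defined.

End SubES.

Definition restrictES (E : ES) (Q : ev E -> Prop) (HQ : finite Q) : ES :=
  @subES E Q HQ (fun a b => le (proj1_sig a) (proj1_sig b))
     (fun a => le_refl _) (fun a b c => @le_trans _ _ _ _) (fun a b H => H).

Definition restrict_incl (E : ES) (Q : ev E -> Prop) (HcQ : config Q) :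
  esmap (restrictES (config_finite HcQ)) E.
Proof.
  refine (@mkEsmap (restrictES (config_finite HcQ)) E (@proj1_sig _ _) _ _).
  - intros c Hc. split; [|split].
    + apply finite_image, (config_finite Hc).
    + apply (config_con Hc).
    + intros e e' [b [Hb Hbe]] Hle. subst.
      exists (exist Q e (config_down HcQ (proj2_sig b) Hle)). split; auto.
      eapply (config_down Hc); eauto.
  - intros; apply proj1_sig_inj; auto.
Defined.

Definition restrict_cod (D E : ES) (Q : ev E -> Prop) (HQ : finite Q) (f : esmap D E)
  (Hf : forall x, Q (f x)) : esmap D (restrictES HQ).
Proof.
  refine (@mkEsmap D (restrictES HQ) (fun x => exist Q (f x) (Hf x)) _ _).
  - intros x Hx. pose proof (fn_conf f Hx) as Hi. split; [apply finite_sig; auto|split].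
    + simpl. eapply con_sub. apply (config_con Hi).
      intros u [a [[b [Hb Hab]] Hu]]; subst. exists b; auto.
    + simpl. intros a b [y [Hy Hyb]] Hab. subst. simpl in Hab.
      assert (image f x (proj1_sig a)) as [y' [Hy' Hya]].
      { eapply config_down; eauto. exists y; auto. }
      exists y'. split; auto. apply proj1_sig_inj; auto.
  - intros x Hx e1 e2 H1 H2 H. apply (@fn_inj _ _ f _ Hx); auto.
    apply (f_equal (@proj1_sig _ _)) in H. exact H.
Defined.

Definition restrict_coarsen (E : ES) (Q : ev E -> Prop) (HQ : finite Q)
  (ord : sig Q -> sig Q -> Prop) (ord_refl : forall a, ord a a)
  (ord_trans : forall a b c, ord a b -> ord b c -> ord a c)
  (ord_le : forall a b, ord a b -> le (proj1_sig a) (proj1_sig b)) :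
  esmap (restrictES HQ) (subES HQ ord_refl ord_trans ord_le).
Proof.
  refine (@mkEsmap (restrictES HQ) (subES HQ ord_refl ord_trans ord_le) (fun a => a) _ _).
  - intros x Hx. split; [apply finite_sig; auto|split].
    + eapply con_sub. apply (config_con Hx). intros w [b [Hb E']]; subst; auto.
    + intros a b [b' [Hb' E']] Hab. subst. exists a. split; auto.
      apply (config_down Hx Hb'). apply ord_le. auto.
  - auto.
Defined.

Lemma lift_along_rigid (C Y Z : ES) (f : esmap C Y) (l : esmap Z Y) (Hr : rigid l)
  (z : ev Z -> Prop) (Hz : config z) (Hf : forall a, exists e, z e /\ l e = f a)
  (Hinj : forall a b, f a = f b -> a = b) :
  exists h : esmap C Z, forall a, z (h a) /\ l (h a) = f a.
Proof.
  pose (h := fun a => proj1_sig (constructive_indefinite_description _ (Hf a))).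
  assert (Hh : forall a, z (h a) /\ l (h a) = f a).
  { intro a. unfold h. destruct (constructive_indefinite_description _ _); auto. }
  unshelve eexists (@mkEsmap C Z h _ _); [| |exact Hh].
  - intros c Hc. split; [|split].
    + apply finite_image, (config_finite Hc).
    + eapply con_sub. apply (config_con Hz). intros w [a [_ Hw]]. subst. apply Hh.
    + intros w w' [b [Hb Hbw]] Hle. subst w'.
      assert (Hzw : z w) by (eapply (config_down Hz); [apply Hh|exact Hle]).
      pose proof (Hr _ _ Hle) as Hle'. rewrite (proj2 (Hh b)) in Hle'.
      assert (Hfi : image f c (l w)).
      { eapply config_down. apply (fn_conf f Hc). exists b; split; auto. exact Hle'. }
      destruct Hfi as [a [Ha Hfa]]. exists a. split; auto.
      apply (@fn_inj _ _ l _ Hz); auto. apply Hh. rewrite (proj2 (Hh a)). auto.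
  - intros c Hc e1 e2 H1 H2 H. apply Hinj.
    rewrite <- (proj2 (Hh e1)), <- (proj2 (Hh e2)), H. reflexivity.
Qed.
Definition sym_pairs (X : ESS) (z : ev (symE X) -> Prop) (a b : ev X) : Prop :=
  exists e, z e /\ sl X e = a /\ sr X e = b.
Arguments sym_pairs X z a b : clear implicits.

Section SymmetryFacts.
Variable X : ESS.

Lemma sym_rigid_l : rigid (sl X).
Proof. apply (sym_ok X). Qed.

Lemma sym_monic (C : ES) (f g : esmap C (symE X)) :
  (forall c, sl X (f c) = sl X (g c)) -> (forall c, sr X (f c) = sr X (g c)) ->
  forall c, f c = g c.
Proof. intros. apply (proj1 (proj2 (proj2 (sym_ok X)))); auto. Qed.

Lemma sym_equiv : equiv_rel (sl X) (sr X).
Proof. apply (sym_ok X). Qed.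

Lemma image_sl_iff_pairs w a : image (sl X) w a <-> exists b, sym_pairs X w a b.
Proof.
  split. intros [e [He H]]; exists (sr X e), e; auto.
  intros [b [e [He [H1 H2]]]]; exists e; auto.
Qed.

Lemma in_iso_same (r1 r2 : ev X -> ev X -> Prop) :
  in_iso r1 -> (forall a b, r1 a b <-> r2 a b) -> in_iso r2.
Proof. intros [xt [Hc H]] He. exists xt; split; auto. intros a b. rewrite <- He. apply H. Qed.

Lemma in_iso_id (c : ev X -> Prop) : config c -> in_iso (A := X) (fun a b => c a /\ a = b).
Proof.
  intros Hc. pose (j := restrict_incl Hc).
  destruct (sym_equiv (restrictES (config_finite Hc))) as [Hrefl _].
  destruct (Hrefl j) as [k Hk].
  exists (image k (fun _ => True)). split.
  - apply fn_conf, subES_config_full, Hc.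
  - intros a b; split.
    + intros [Ha Hab]; subst b. exists (k (exist _ a Ha)). split. exists (exist _ a Ha); auto.
      destruct (Hk (exist _ a Ha)) as [K1 K2]. rewrite K1, K2; auto.
    + intros [e [[u [_ Hu]] [H1 H2]]]. subst. destruct (Hk u) as [K1 K2]. rewrite K1, K2.
      split; [apply (proj2_sig u)|auto].
Qed.

Lemma sym_extend_l (w0 : ev (symE X) -> Prop) t :
  config w0 -> config (fun u => image (sl X) w0 u \/ u = t) -> ~ image (sl X) w0 t ->
  exists z s2, config z /\
    forall a b, sym_pairs X z a b <-> (sym_pairs X w0 a b \/ (a = t /\ b = s2)).
Proof.
  intros Hw Hc Hn. destruct (proj1 (sym_ok X)) as [_ Ho].
  destruct (Ho w0 _ Hw Hc) as [z [Hz [Hsub Hsame]]]. { intros u Hu; left; auto. }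
  destruct (proj2 (Hsame t) (or_intror eq_refl)) as [u [Hu Hut]].
  exists z, (sr X u). split; auto. intros a b; split.
  - intros [e [He [H1 H2]]].
    destruct (proj1 (Hsame a) (ex_intro _ e (conj He H1))) as [[e0 [He0 H0]]|Ha].
    + left. assert (e = e0) by (apply (@fn_inj _ _ (sl X) _ Hz); auto; congruence).
      subst. exists e0; auto.
    + right. subst. split; auto. f_equal. apply (@fn_inj _ _ (sl X) _ Hz); auto.
  - intros [[e [He [H1 H2]]]|[H1 H2]].
    + exists e; auto.
    + subst; exists u; auto.
Qed.

End SymmetryFacts.

Lemma is_symmetry_swap (A At : ES) (l r : esmap At A) : is_symmetry l r -> is_symmetry r l.
Proof.
  intros [H1 [H2 [H3 H4]]]. split; [auto|split; [auto|split]].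
  - intros C g h Hr Hl. apply H3; auto.
  - assert (Hflip : forall C (f g : esmap C A), related l r f g -> related r l g f).
    { intros C f g [k Hk]. exists k. intro c; split; apply Hk. }
    intros C. destruct (H4 C) as [R [Sy Tr]]. split; [|split].
    + intros f. apply Hflip, R.
    + intros f g Hfg. apply Hflip, Sy. destruct Hfg as [k Hk]. exists k; intro c; split; apply Hk.
    + intros f g h Hfg Hgh. apply Hflip. apply Tr with g;
        [destruct Hgh as [k Hk] | destruct Hfg as [k Hk]]; exists k; intro c; split; apply Hk.
Qed.

Definition swapESS (X : ESS) : ESS :=
  @mkESS (base X) (symE X) (sr X) (sl X) (is_symmetry_swap (sym_ok X)).
Definition swapESSP (X : ESSP) : ESSP :=
  @mkESSP (swapESS X) (pol X) (fun e => eq_sym (@pol_sym X e)).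

(* The isomorphism family is closed under inverses. *)
Lemma in_iso_swap (X : ESS) th : in_iso (A := swapESS X) th -> in_iso (A := X) th.
Proof.
  intros [xt [Hxt Hth]]. simpl in Hth.
  pose (i := restrict_incl Hxt).
  destruct (sym_equiv X (restrictES (config_finite Hxt))) as [_ [Sy _]].
  destruct (Sy (esmap_comp (sl X) i) (esmap_comp (sr X) i)) as [k Hk].
  { exists i. intro; split; reflexivity. }
  exists (image k (fun _ => True)). split.
  - apply fn_conf, subES_config_full, Hxt.
  - intros a b. rewrite Hth. split.
    + intros [e [He [H1 H2]]]. exists (k (exist _ e He)). split. exists (exist _ e He); auto.
      destruct (Hk (exist _ e He)) as [K1 K2]. rewrite K1, K2. simpl. auto.
    + intros [e [[c [_ Hc]] [H1 H2]]]. subst. exists (proj1_sig c). split. apply proj2_sig.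
      destruct (Hk c) as [K1 K2]. rewrite K1, K2. simpl. auto.
Qed.

Lemma strong_receptive_swap (S A : ESSP) (s : esmap S A) :
  strong_receptive s -> strong_receptive (S := swapESSP S) (A := swapESSP A) s.
Proof.
  intros H th Hth a1 a2 H1 H2 H3 P1 P2.
  destruct (H th (in_iso_swap Hth) a1 a2 (in_iso_swap H1) H2 (in_iso_swap H3) P1 P2)
    as [s1 [s2 [[K1 [K2 [K3 K4]]] U]]].
  exists s1, s2. split.
  - split; auto. split; auto. apply (in_iso_swap (X := swapESS S)); auto.
  - intros t1 t2 J1 J2 J3 J4. apply U; auto. apply in_iso_swap; auto.
Qed.

Lemma pre_strategy_swap (S A : ESSP) (s : esmap S A) st :
  pre_strategy s st -> pre_strategy (S := swapESSP S) (A := swapESSP A) s st.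
Proof. intros [H1 H2]. split; auto. intro e; simpl; split; apply H1. Qed.

Lemma in_iso_intro (X : ESS) (z : ev (symE X) -> Prop) (r : ev X -> ev X -> Prop) :
  config z -> (forall a b, sym_pairs X z a b <-> r a b) -> in_iso (A := X) r.
Proof. intros Hz Hr. exists z. split; auto. intros a b. rewrite <- Hr. reflexivity. Qed.
Lemma image2_add {X Y} (f : X -> Y) (r : X -> X -> Prop) s s' a b :
  image2 f (fun a b => r a b \/ (a = s /\ b = s')) a b <->
  (image2 f r a b \/ (a = f s /\ b = f s')).
Proof.
  split.
  - intros [x1 [x2 [[H|[H1 H2]] [E1 E2]]]]; subst. left; exists x1, x2; auto. right; auto.
  - intros [[x1 [x2 [H [E1 E2]]]]|[E1 E2]]. exists x1, x2; auto. exists s, s'; subst; auto.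
Qed.

Section IsoImage.
Variables (A U : ESS) (f : esmap U A) (ft : esmap (symE U) (symE A)).
Hypothesis Hf : lifts (sl U) (sr U) (sl A) (sr A) f ft.

Lemma in_iso_image2 (r : ev U -> ev U -> Prop) :
  in_iso (A := U) r -> in_iso (A := A) (image2 f r).
Proof.
  intros [i [Hi Hr]]. exists (image ft i). split. apply fn_conf; auto.
  intros a b. split.
  - intros [x1 [x2 [Hx [E1 E2]]]]. apply Hr in Hx. destruct Hx as [e [He [H1 H2]]].
    exists (ft e). split. exists e; auto. destruct (Hf e) as [K1 K2]. rewrite K1, K2. subst; auto.
  - intros [e [[e0 [He0 He]] [H1 H2]]]. subst. destruct (Hf e0) as [K1 K2].
    exists (sl U e0), (sr U e0). split. apply Hr. exists e0; auto. auto.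
Qed.

Lemma in_iso_image2_add (r : ev U -> ev U -> Prop) s s' :
  in_iso (A := U) (fun a b => r a b \/ (a = s /\ b = s')) ->
  in_iso (A := A) (fun a b => image2 f r a b \/ (a = f s /\ b = f s')).
Proof.
  intros H. eapply in_iso_same. apply (in_iso_image2 H). intros; apply image2_add.
Qed.

End IsoImage.

Section Receptivity.
Variables (A T : ESSP) (tau : esmap T A) (taut : esmap (symE T) (symE A)).
Hypothesis Hlift : lifts (sl T) (sr T) (sl A) (sr A) tau taut.
Hypothesis Hrec : strong_receptive tau.

Lemma in_iso_id_add (c : ev T -> Prop) t :
  config (fun u => c u \/ u = t) ->
  in_iso (A := T) (fun a b => (c a /\ a = b) \/ (a = t /\ b = t)).
Proof.
  intros Hc. eapply in_iso_same. apply (in_iso_id Hc).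
  intros a b. split; [intros [[H|H] E]; subst; auto | intros [[H E]|[E1 E2]]; subst; auto].
Qed.

(* Uniqueness in strong receptivity, applied to the identity on [c]. *)
Lemma receptive_neg_ext_unique (c : ev T -> Prop) t r :
  config c -> ~ c t -> ~ c r ->
  config (fun u => c u \/ u = t) -> config (fun u => c u \/ u = r) ->
  tau t = tau r -> pol A (tau t) = false -> t = r.
Proof.
  intros Hc Hnt Hnr Hct Hcr Htr Hpol.
  set (th0 := fun a b : ev T => c a /\ a = b).
  assert (Hnd0 : ~ exists b, image2 tau th0 (tau t) b).
  { intros [b [x1 [x2 [[Hx _] [E1 E2]]]]]. apply Hnt.
    assert (x1 = t) by
      (apply (@fn_inj _ _ tau _ Hct x1 t (or_introl Hx) (or_intror eq_refl) E1)).
    subst; auto. }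
  destruct (Hrec (in_iso_id Hc) (in_iso_image2 Hlift (in_iso_id Hc)) Hnd0
              (in_iso_image2_add Hlift (in_iso_id_add Hct)) Hpol Hpol)
    as [r1 [r2 [_ Huniq]]].
  assert (Et : t = r1).
  { apply (Huniq t t); auto. intros [b [Hb _]]. auto. apply in_iso_id_add; auto. }
  assert (Er : r = r1).
  { apply (Huniq r r); auto. intros [b [Hb _]]. auto. apply in_iso_id_add; auto. }
  congruence.
Qed.

Lemma receptive_extend (w0 : ev (symE T) -> Prop) t a' :
  config w0 -> config (fun u => image (sl T) w0 u \/ u = t) -> ~ image (sl T) w0 t ->
  in_iso (A := A) (fun a b => image2 tau (sym_pairs T w0) a b \/ (a = tau t /\ b = a')) ->
  pol A (tau t) = false -> pol A a' = false ->
  exists w t2, config w /\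
    (forall a b, sym_pairs T w a b <-> (sym_pairs T w0 a b \/ (a = t /\ b = t2))) /\
    tau t2 = a'.
Proof.
  intros Hw0 Hct Hnt HzA P1 P2.
  set (c := image (sl T) w0) in *.
  set (th := sym_pairs T w0).
  assert (Hth : in_iso (A := T) th) by (exists w0; split; auto; intros; unfold th; tauto).
  assert (Hnd : ~ exists b, image2 tau th (tau t) b).
  { intros [b [x1 [x2 [Hx [E1 E2]]]]]. apply Hnt.
    assert (Hx1 : c x1) by (apply image_sl_iff_pairs; exists x2; auto).
    assert (x1 = t) by
      (apply (@fn_inj _ _ tau _ Hct x1 t (or_introl Hx1) (or_intror eq_refl) E1)).
    subst; auto. }
  destruct (Hrec Hth (in_iso_image2 Hlift Hth) Hnd HzA P1 P2)
    as [r1 [r2 [[Hr1 [[w1 [Hw1 Hw1r]] [E1 E2]]] _]]].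
  assert (Hw1p : forall a b, sym_pairs T w1 a b <-> (th a b \/ (a = r1 /\ b = r2))).
  { intros a b. rewrite Hw1r. reflexivity. }
  assert (Hcr : config (fun u => c u \/ u = r1)).
  { eapply config_same. apply (fn_conf (sl T) Hw1). intro u. rewrite image_sl_iff_pairs. split.
    - intros [b Hb]. apply Hw1p in Hb. destruct Hb as [Hb|[Hu _]].
      left. apply image_sl_iff_pairs; eauto. right; auto.
    - intros [Hu|Hu].
      + apply image_sl_iff_pairs in Hu. destruct Hu as [b Hb]. exists b. apply Hw1p. left; auto.
      + exists r2. apply Hw1p. right; auto. }
  assert (Ht : t = r1).
  { apply (receptive_neg_ext_unique (c := c)); auto.
    - apply fn_conf; auto.
    - intros Hc1. apply Hr1. apply image_sl_iff_pairs in Hc1. exact Hc1. }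
  subst r1. exists w1, r2. auto.
Qed.

End Receptivity.

Lemma is_pullback_ext (X Y Z Pb : ES) (f : esmap X Z) (g : esmap Y Z)
  (p : esmap Pb X) (p' : esmap Pb Y) :
  is_pullback f g p p' -> forall (C : ES) (u v : esmap C Pb),
  (forall c, p (u c) = p (v c)) -> (forall c, p' (u c) = p' (v c)) -> forall c, u c = v c.
Proof.
  intros [Hc Hu] C u v H1 H2 c.
  destruct (Hu C (esmap_comp p u) (esmap_comp p' u)) as [k [_ Hk]].
  { intro x; simpl; apply Hc. }
  rewrite (Hk u (fun _ => eq_refl) (fun _ => eq_refl)).
  rewrite (Hk v); [reflexivity | intros; simpl; symmetry; auto | intros; simpl; symmetry; auto].
Qed.

Lemma sym_pairs_image (X : ESS) (Pt : ES) (q : esmap Pt (symE X)) (x : ev Pt -> Prop) a b :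
  sym_pairs X (image q x) a b <-> exists e, x e /\ sl X (q e) = a /\ sr X (q e) = b.
Proof.
  split.
  - intros [e [[ep [Hep E]] [E1 E2]]]; subst; eauto.
  - intros [ep [Hep [E1 E2]]]. exists (q ep). split; auto. exists ep; auto.
Qed.

Lemma pol_sym_pairs (X : ESSP) z a b : sym_pairs X z a b -> pol X a = pol X b.
Proof. intros [e [_ [E1 E2]]]. subst. apply pol_sym. Qed.

Section SymmetryAlongProjection.
Variables (P Pt : ES) (lP : esmap Pt P) (X : ESS) (f : esmap P X) (q : esmap Pt (symE X)).
Hypothesis Hfq : forall e, f (lP e) = sl X (q e).
Variables (x : ev Pt -> Prop) (d : ev P).
Hypotheses (Hx : config x) (Hnd : ~ image lP x d)
  (HY : config (fun u => image lP x u \/ u = d)).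

Lemma image_sl_add_config : config (fun u => image (sl X) (image q x) u \/ u = f d).
Proof.
  eapply config_same. apply (fn_conf f HY). intro u. split.
  - intros [v [[Hv|Hv] Hvu]]; subst.
    + destruct Hv as [ep [Hep E]]; subst. left. exists (q ep). split. exists ep; auto.
      symmetry; apply Hfq.
    + right; auto.
  - intros [[e [[ep [Hep E]] E']]|Hu]; subst.
    + exists (lP ep). split. left; exists ep; auto. apply Hfq.
    + exists d; split; [right; auto|auto].
Qed.

Lemma image_sl_fresh : ~ image (sl X) (image q x) (f d).
Proof.
  intros [e [[ep [Hep E]] E']]; subst. apply Hnd. exists ep; split; auto.
  apply (@fn_inj _ _ f _ HY); [left; exists ep; auto | right; auto | ].
  rewrite Hfq; exact E'.
Qed.

Lemma lift_extended_sym (z : ev (symE X) -> Prop) s2 :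
  config z ->
  (forall a b, sym_pairs X z a b <-> (sym_pairs X (image q x) a b \/ (a = f d /\ b = s2))) ->
  exists h : esmap (restrictES (config_finite HY)) (symE X),
    (forall a, sl X (h a) = f (proj1_sig a)) /\
    (forall a ep, x ep -> proj1_sig a = lP ep -> sr X (h a) = sr X (q ep)) /\
    (forall a, proj1_sig a = d -> sr X (h a) = s2).
Proof.
  intros Hz Hzr.
  assert (Hzr' : forall a b, sym_pairs X z a b <->
             ((exists e, x e /\ sl X (q e) = a /\ sr X (q e) = b) \/ (a = f d /\ b = s2))).
  { intros a b. rewrite Hzr, sym_pairs_image. reflexivity. }
  set (i := restrict_incl HY).
  assert (Hcover : forall a, exists e, z e /\ sl X e = f (i a)).
  { intro a. simpl. destruct (proj2_sig a) as [[ep [Hep Hepa]]|Hd].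
    - destruct (proj2 (Hzr' (sl X (q ep)) (sr X (q ep)))) as [e [He [E1 E2]]].
      { left; exists ep; auto. }
      exists e; split; auto. rewrite E1, <- Hepa. symmetry; apply Hfq.
    - destruct (proj2 (Hzr' (f d) s2)) as [e [He [E1 E2]]]. { right; auto. }
      exists e; split; auto. rewrite E1, Hd. reflexivity. }
  assert (Hinj : forall a b, f (i a) = f (i b) -> a = b).
  { intros a b H. apply proj1_sig_inj. apply (@fn_inj _ _ f _ HY); auto; apply proj2_sig. }
  destruct (lift_along_rigid (f := esmap_comp f i) (sym_rigid_l (X := X)) Hz Hcover Hinj)
    as [h Hh].
  assert (Hpair : forall a, (exists ep, x ep /\ sl X (q ep) = f (proj1_sig a) /\
                                         sr X (q ep) = sr X (h a)) \/
                            (f (proj1_sig a) = f d /\ sr X (h a) = s2)).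
  { intro a. change (f (proj1_sig a)) with (esmap_comp f i a). rewrite <- (proj2 (Hh a)).
    apply Hzr'. exists (h a). split; auto. apply Hh. }
  exists h. split; [|split].
  - intro a. apply Hh.
  - intros a ep Hep Ha. destruct (Hpair a) as [[ep' [Hep' [E1 E2]]]|[E1 E2]].
    + rewrite <- E2. f_equal. apply (@fn_inj _ _ (sl X) _ (fn_conf q Hx)).
      exists ep'; auto. exists ep; auto. rewrite E1, Ha. apply Hfq.
    + exfalso. apply Hnd. rewrite <- (@fn_inj _ _ f _ HY _ _ (proj2_sig a) (or_intror eq_refl) E1).
      rewrite Ha. exists ep; auto.
  - intros a Ha. destruct (Hpair a) as [[ep' [Hep' [E1 E2]]]|[E1 E2]]; auto.
    exfalso. apply Hnd. rewrite Ha, <- Hfq in E1.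
    rewrite <- (@fn_inj _ _ f _ HY _ _ (or_introl (ex_intro _ ep' (conj Hep' eq_refl)))
                  (or_intror eq_refl) E1).
    exists ep'; auto.
Qed.

End SymmetryAlongProjection.

Lemma le_of_sym_projection (P Pt : ES) (lP : esmap Pt P) (X : ESS) (f : esmap P X)
  (q : esmap Pt (symE X)) (Hfq : forall e, f (lP e) = sl X (q e))
  (c : ev Pt -> Prop) a b :
  config c -> c a -> c b -> le (q a) (q b) -> le (lP a) (lP b).
Proof.
  intros Hc Ha Hb Hle. apply (esmap_le_reflect (f := f) (fn_conf lP Hc)).
  - exists a; auto.
  - exists b; auto.
  - rewrite !Hfq. apply sym_rigid_l, Hle.
Qed.
Section OpenProjection.
Variables (A S T : ESSP) (sg : esmap S A) (sgt : esmap (symE S) (symE A))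
  (tau : esmap T (dual A)) (taut : esmap (symE T) (symE (dual A))).
Hypotheses (Hsg : pre_strategy sg sgt) (Hsg_r : strong_receptive sg)
  (Htau : pre_strategy tau taut) (Htau_r : strong_receptive tau).
Variables (P : ES) (p1 : esmap P S) (p2 : esmap P T).
Hypothesis HP : is_pullback (Z := base A) sg tau p1 p2.
Variables (Pt : ES) (q1 : esmap Pt (symE S)) (q2 : esmap Pt (symE T)).
Hypothesis HPt : is_pullback (Z := symE A) sgt taut q1 q2.
Variable lP : esmap Pt P.
Hypothesis HlP : forall e, p1 (lP e) = sl S (q1 e) /\ p2 (lP e) = sl T (q2 e).

Let Hlp1 e : p1 (lP e) = sl S (q1 e) := proj1 (HlP e).
Let Hlp2 e : p2 (lP e) = sl T (q2 e) := proj2 (HlP e).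
Let Hsgt e : sl A (sgt e) = sg (sl S e) /\ sr A (sgt e) = sg (sr S e) := proj1 Hsg e.
Let Htaut e : sl A (taut e) = tau (sl T e) /\ sr A (taut e) = tau (sr T e) := proj1 Htau e.

(** Within the down-closure of [top], the causality of [Pt] is generated by
    that of [q1] and [q2]. *)
Section GeneratedCausality.
Variable top : ev Pt.

Definition gen_step (a b : sig (fun u => le u top)) : Prop :=
  le (q1 (proj1_sig a)) (q1 (proj1_sig b)) \/ le (q2 (proj1_sig a)) (q2 (proj1_sig b)).
Definition gen_le := clos_refl_trans _ gen_step.

Lemma gen_le_le a b : gen_le a b -> le (proj1_sig a) (proj1_sig b).
Proof.
  intros H. induction H as [a b [H|H]| a | a b c _ IH1 _ IH2].
  - exact (esmap_le_reflect (config_prime top) (proj2_sig a) (proj2_sig b) H).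
  - exact (esmap_le_reflect (config_prime top) (proj2_sig a) (proj2_sig b) H).
  - apply le_refl.
  - eapply le_trans; eauto.
Qed.

Lemma gen_le_lP a b : gen_le a b -> le (lP (proj1_sig a)) (lP (proj1_sig b)).
Proof.
  intros H. induction H as [a b [H|H]| a | a b c _ IH1 _ IH2].
  - exact (le_of_sym_projection Hlp1 (config_prime top) (proj2_sig a) (proj2_sig b) H).
  - exact (le_of_sym_projection Hlp2 (config_prime top) (proj2_sig a) (proj2_sig b) H).
  - apply le_refl.
  - eapply le_trans; eauto.
Qed.

(* The pullback property of [Pt] applied to the down-closure of [top] with the
   generated order: the mediating map is the identity, so the configuration of
   all events generated-below [top] is down-closed in [Pt]. *)
Lemma gen_le_top a : gen_le a (exist (fun u => le u top) top (le_refl top)).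
Proof.
  pose (HcQ := config_prime top).
  pose (Hrefl := @rt_refl _ gen_step). pose (Htrans := @rt_trans _ gen_step).
  pose (G := subES (config_finite HcQ) Hrefl Htrans gen_le_le).
  pose (c1 := subES_restrict (config_finite HcQ) Hrefl Htrans gen_le_le (f := q1) HcQ
                (fun a b H => rt_step _ _ _ _ (or_introl H))).
  pose (c2 := subES_restrict (config_finite HcQ) Hrefl Htrans gen_le_le (f := q2) HcQ
                (fun a b H => rt_step _ _ _ _ (or_intror H))).
  destruct (proj2 HPt G c1 c2) as [k [[Hk1 Hk2] _]]. { intro b. apply (proj1 HPt). }
  assert (Hk : forall b, k b = proj1_sig b).
  { apply (is_pullback_ext HPt
             (u := esmap_comp k (restrict_coarsen (config_finite HcQ) Hrefl Htrans gen_le_le))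
             (v := restrict_incl HcQ)); intro b; simpl; auto. }
  pose (top' := exist (fun u => le u top) top (le_refl top)).
  assert (Hdown : config (E := G) (fun b => gen_le b top')).
  { split; [apply finite_sig, config_finite, HcQ | split].
    - change (con (image (@proj1_sig _ _) (fun b => gen_le b top'))).
      eapply con_sub. apply (config_con HcQ). intros w [b [_ Hw]]. subst. apply proj2_sig.
    - intros b b' Hb' Hbb'. eapply rt_trans; eauto. }
  assert (Ha : image k (fun b => gen_le b top') (proj1_sig a)).
  { eapply config_down. apply (fn_conf k Hdown).
    exists top'. split. apply rt_refl. apply Hk. apply (proj2_sig a). }
  destruct Ha as [b [Hb Hba]]. rewrite Hk in Hba.
  rewrite <- (proj1_sig_inj Hba). exact Hb.
Qed.

End GeneratedCausality.

Lemma lP_rigid : rigid lP.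
Proof.
  intros e top Hle.
  exact (gen_le_lP (gen_le_top (exist (fun u => le u top) e Hle))).
Qed.

Lemma image2_pairs_image (x : ev Pt -> Prop) a b :
  image2 sg (sym_pairs S (image q1 x)) a b <-> image2 tau (sym_pairs T (image q2 x)) a b.
Proof.
  split; intros [x1 [x2 [Hx [F1 F2]]]]; apply sym_pairs_image in Hx;
    destruct Hx as [ep [Hep [E1 E2]]]; subst.
  - exists (sl T (q2 ep)), (sr T (q2 ep)). split; [apply sym_pairs_image; exists ep; auto|].
    rewrite <- (proj1 (Hsgt _)), <- (proj2 (Hsgt _)), (proj1 HPt).
    split; symmetry; [apply (proj1 (Htaut _)) | apply (proj2 (Htaut _))].
  - exists (sl S (q1 ep)), (sr S (q1 ep)). split; [apply sym_pairs_image; exists ep; auto|].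
    rewrite <- (proj1 (Hsgt _)), <- (proj2 (Hsgt _)), (proj1 HPt).
    split; [apply (proj1 (Htaut _)) | apply (proj2 (Htaut _))].
Qed.

Section OneStep.
Variables (x : ev Pt -> Prop) (d : ev P).
Hypotheses (Hx : config x) (Hnd : ~ image lP x d)
  (HY : config (fun u => image lP x u \/ u = d)).

(* The positive side of [d] is extended by openness of its symmetry, the
   negative side by strong receptivity. *)
Lemma matching_partners :
  exists z w s2 t2, config z /\ config w /\
    (forall a b, sym_pairs S z a b <-> (sym_pairs S (image q1 x) a b \/ (a = p1 d /\ b = s2))) /\
    (forall a b, sym_pairs T w a b <-> (sym_pairs T (image q2 x) a b \/ (a = p2 d /\ b = t2))) /\
    sg s2 = tau t2.
Proof.
  pose proof (image_sl_add_config Hlp1 HY) as HcS.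
  pose proof (image_sl_add_config Hlp2 HY) as HcT.
  pose proof (image_sl_fresh Hlp1 Hnd HY) as HnS.
  pose proof (image_sl_fresh Hlp2 Hnd HY) as HnT.
  destruct (pol S (p1 d)) eqn:Hpol.
  - destruct (sym_extend_l (fn_conf q1 Hx) HcS HnS) as [z [s2 [Hz Hzr]]].
    assert (HzA : in_iso (A := dual A)
              (fun a b => image2 tau (sym_pairs T (image q2 x)) a b \/
                          (a = tau (p2 d) /\ b = sg s2))).
    { eapply in_iso_same. apply (in_iso_image2_add (proj1 Hsg) (in_iso_intro Hz Hzr)).
      intros a b; simpl. rewrite image2_pairs_image, (proj1 HP). reflexivity. }
    assert (Hs2 : pol S s2 = true).
    { rewrite <- Hpol. symmetry. apply pol_sym_pairs with z. apply Hzr. auto. }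
    destruct (receptive_extend (proj1 Htau) Htau_r (fn_conf q2 Hx) HcT HnT HzA)
      as [w [t2 [Hw [Hwr Ht2]]]].
    + simpl. rewrite <- (proj1 HP), (proj2 Hsg), Hpol. reflexivity.
    + simpl. rewrite (proj2 Hsg), Hs2. reflexivity.
    + exists z, w, s2, t2. auto.
  - destruct (sym_extend_l (fn_conf q2 Hx) HcT HnT) as [w [t2 [Hw Hwr]]].
    assert (HwA : in_iso (A := A)
              (fun a b => image2 sg (sym_pairs S (image q1 x)) a b \/
                          (a = sg (p1 d) /\ b = tau t2))).
    { eapply in_iso_same. apply (in_iso_image2_add (proj1 Htau) (in_iso_intro Hw Hwr)).
      intros a b; simpl. rewrite image2_pairs_image, (proj1 HP). reflexivity. }
    assert (Ht2 : pol (dual A) (tau t2) = true).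
    { rewrite (proj2 Htau), <- (pol_sym_pairs (proj2 (Hwr _ _) (or_intror (conj eq_refl eq_refl)))).
      rewrite <- (proj2 Htau), <- (proj1 HP). simpl. rewrite (proj2 Hsg), Hpol. reflexivity. }
    destruct (receptive_extend (proj1 Hsg) Hsg_r (fn_conf q1 Hx) HcS HnS HwA)
      as [z [s2 [Hz [Hzr Hs2]]]].
    + rewrite (proj2 Hsg), Hpol. reflexivity.
    + simpl in Ht2. apply Bool.negb_true_iff in Ht2. exact Ht2.
    + exists z, w, s2, t2. auto.
Qed.

Lemma glue_partners z w s2 t2 :
  config z -> config w ->
  (forall a b, sym_pairs S z a b <-> (sym_pairs S (image q1 x) a b \/ (a = p1 d /\ b = s2))) ->
  (forall a b, sym_pairs T w a b <-> (sym_pairs T (image q2 x) a b \/ (a = p2 d /\ b = t2))) ->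
  sg s2 = tau t2 ->
  exists x', config x' /\ subset x x' /\ same_set (image lP x') (fun u => image lP x u \/ u = d).
Proof.
  intros Hz Hw Hzr Hwr Hst.
  destruct (lift_extended_sym Hlp1 Hx Hnd HY Hz Hzr) as [h1 [Hl1 [Hr1 Hd1]]].
  destruct (lift_extended_sym Hlp2 Hx Hnd HY Hw Hwr) as [h2 [Hl2 [Hr2 Hd2]]].
  assert (Hh : forall a, sgt (h1 a) = taut (h2 a)).
  { apply (sym_monic (X := A) (f := esmap_comp sgt h1) (g := esmap_comp taut h2)); intro a;
      simpl.
    - rewrite (proj1 (Hsgt _)), (proj1 (Htaut _)), Hl1, Hl2. apply (proj1 HP).
    - rewrite (proj2 (Hsgt _)), (proj2 (Htaut _)).
      destruct (proj2_sig a) as [[ep [Hep Hepa]]|Had].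
      + rewrite (Hr1 a ep Hep (eq_sym Hepa)), (Hr2 a ep Hep (eq_sym Hepa)).
        rewrite <- (proj2 (Hsgt _)), <- (proj2 (Htaut _)). f_equal. apply (proj1 HPt).
      + rewrite (Hd1 a Had), (Hd2 a Had). exact Hst. }
  destruct (proj2 HPt _ h1 h2 Hh) as [k [[Hk1 Hk2] _]].
  assert (HlPk : forall a, lP (k a) = proj1_sig a).
  { apply (is_pullback_ext HP (u := esmap_comp lP k) (v := restrict_incl HY)); intro a;
      simpl; rewrite ?Hlp1, ?Hlp2, ?Hk1, ?Hk2; auto. }
  assert (HmY : forall ep : sig x, (fun u => image lP x u \/ u = d) (lP (proj1_sig ep))).
  { intro ep. left. exists (proj1_sig ep). split; [apply proj2_sig|reflexivity]. }
  pose (m := restrict_cod (config_finite HY) (f := esmap_comp lP (restrict_incl Hx)) HmY).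
  assert (Hkm : forall ep, k (m ep) = proj1_sig ep).
  { apply (is_pullback_ext HPt (u := esmap_comp k m) (v := restrict_incl Hx)).
    - apply (sym_monic (X := S) (f := esmap_comp q1 (esmap_comp k m))
                                (g := esmap_comp q1 (restrict_incl Hx))); intro ep; simpl;
        rewrite Hk1; [rewrite Hl1; apply Hlp1 | apply (Hr1 (m ep) _ (proj2_sig ep) eq_refl)].
    - apply (sym_monic (X := T) (f := esmap_comp q2 (esmap_comp k m))
                                (g := esmap_comp q2 (restrict_incl Hx))); intro ep; simpl;
        rewrite Hk2; [rewrite Hl2; apply Hlp2 | apply (Hr2 (m ep) _ (proj2_sig ep) eq_refl)]. }
  exists (image k (fun _ => True)). split; [|split].
  - apply fn_conf, subES_config_full, HY.
  - intros ep Hep. exists (m (exist _ ep Hep)). split; [auto | apply Hkm].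
  - intro u. split.
    + intros [e [[a [_ Ha]] He]]. subst. rewrite HlPk. apply proj2_sig.
    + intros Hu. exists (k (exist _ u Hu)). split. exists (exist _ u Hu); auto. apply HlPk.
Qed.

End OneStep.

Lemma lP_open : open_map lP.
Proof.
  split; [apply lP_rigid|].
  apply extension_of_one_step. intros x d Hx Hnd HY.
  destruct (matching_partners Hx Hnd HY) as [z [w [s2 [t2 [Hz [Hw [Hzr [Hwr Hst]]]]]]]].
  exact (glue_partners Hx Hnd HY Hz Hw Hzr Hwr Hst).
Qed.

End OpenProjection.

Section PullbackOfSymmetries.
Variables (A S T : ESSP) (sg : esmap S A) (sgt : esmap (symE S) (symE A))
  (tau : esmap T (dual A)) (taut : esmap (symE T) (symE (dual A))).
Hypotheses (Hsg : pre_strategy sg sgt) (Hsg_r : strong_receptive sg)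
  (Htau : pre_strategy tau taut) (Htau_r : strong_receptive tau).
Variables (P : ES) (p1 : esmap P S) (p2 : esmap P T).
Hypothesis HP : is_pullback (Z := base A) sg tau p1 p2.
Variables (Pt : ES) (q1 : esmap Pt (symE S)) (q2 : esmap Pt (symE T)).
Hypothesis HPt : is_pullback (Z := symE A) sgt taut q1 q2.
Variables (lP rP : esmap Pt P).
Hypotheses (HlP : forall e, p1 (lP e) = sl S (q1 e) /\ p2 (lP e) = sl T (q2 e))
  (HrP : forall e, p1 (rP e) = sr S (q1 e) /\ p2 (rP e) = sr T (q2 e)).

Lemma lifts_p1 : lifts lP rP (sl S) (sr S) p1 q1.
Proof. intro e. split; symmetry; [apply (proj1 (HlP e)) | apply (proj1 (HrP e))]. Qed.

Lemma lifts_p2 : lifts lP rP (sl T) (sr T) p2 q2.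
Proof. intro e. split; symmetry; [apply (proj2 (HlP e)) | apply (proj2 (HrP e))]. Qed.

Lemma rP_open : open_map rP.
Proof.
  exact (@lP_open (swapESSP A) (swapESSP S) (swapESSP T) sg sgt tau taut
           (pre_strategy_swap Hsg) (strong_receptive_swap Hsg_r)
           (pre_strategy_swap Htau) (strong_receptive_swap Htau_r)
           P p1 p2 HP Pt q1 q2 HPt rP HrP).
Qed.

Lemma related_pullback_iff (C : ES) (f g : esmap C P) :
  related lP rP f g <->
  related (sl S) (sr S) (esmap_comp p1 f) (esmap_comp p1 g) /\
  related (sl T) (sr T) (esmap_comp p2 f) (esmap_comp p2 g).
Proof.
  split.
  - intros [k Hk]. split; [exists (esmap_comp q1 k) | exists (esmap_comp q2 k)]; intro c;
      simpl; destruct (Hk c) as [E1 E2]; rewrite <- E1, <- E2.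
    + rewrite (proj1 (HlP _)), (proj1 (HrP _)); auto.
    + rewrite (proj2 (HlP _)), (proj2 (HrP _)); auto.
  - intros [[k1 Hk1] [k2 Hk2]].
    assert (Hk : forall c, sgt (k1 c) = taut (k2 c)).
    { apply (sym_monic (X := A) (f := esmap_comp sgt k1) (g := esmap_comp taut k2)); intro c;
        destruct (Hk1 c) as [E1 E2], (Hk2 c) as [F1 F2]; simpl in *.
      - rewrite (proj1 (proj1 Hsg _)), E1, (proj1 HP), <- F1. symmetry. apply (proj1 Htau).
      - rewrite (proj2 (proj1 Hsg _)), E2, (proj1 HP), <- F2. symmetry. apply (proj1 Htau). }
    destruct (proj2 HPt C k1 k2 Hk) as [K [[K1 K2] _]].
    exists K. intro c. split.
    + refine (is_pullback_ext HP (u := esmap_comp lP K) (v := f) _ _ c); intro x; simpl;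
        rewrite ?(proj1 (HlP _)), ?(proj2 (HlP _)), ?K1, ?K2; [apply Hk1 | apply Hk2].
    + refine (is_pullback_ext HP (u := esmap_comp rP K) (v := g) _ _ c); intro x; simpl;
        rewrite ?(proj1 (HrP _)), ?(proj2 (HrP _)), ?K1, ?K2; [apply Hk1 | apply Hk2].
Qed.

Lemma pullback_equiv_rel : equiv_rel lP rP.
Proof.
  intro C. destruct (sym_equiv S C) as [RS1 [RS2 RS3]].
  destruct (sym_equiv T C) as [RT1 [RT2 RT3]].
  split; [|split].
  - intro f. apply related_pullback_iff; auto.
  - intros f g H. apply related_pullback_iff in H. destruct H.
    apply related_pullback_iff; auto.
  - intros f g h H1 H2. apply related_pullback_iff in H1, H2.
    destruct H1, H2. apply related_pullback_iff. split; eauto.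
Qed.

Lemma pullback_jointly_monic : jointly_monic lP rP.
Proof.
  intros C g h Hl Hr c.
  refine (is_pullback_ext HPt (u := g) (v := h) _ _ c).
  - apply (sym_monic (X := S) (f := esmap_comp q1 g) (g := esmap_comp q1 h)); intro x; simpl.
    + rewrite <- !(proj1 (HlP _)), Hl; auto.
    + rewrite <- !(proj1 (HrP _)), Hr; auto.
  - apply (sym_monic (X := T) (f := esmap_comp q2 g) (g := esmap_comp q2 h)); intro x; simpl.
    + rewrite <- !(proj2 (HlP _)), Hl; auto.
    + rewrite <- !(proj2 (HrP _)), Hr; auto.
Qed.

Lemma pullback_is_symmetry : is_symmetry lP rP.
Proof.
  split; [|split; [|split]].
  - exact (lP_open Hsg Hsg_r Htau Htau_r HP HPt HlP).
  - exact rP_open.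
  - exact pullback_jointly_monic.
  - exact pullback_equiv_rel.
Qed.

Lemma pullback_mediating_lifts (C : ESS) (k : esmap C P) (g : esmap C S) (h : esmap C T) :
  (forall c, p1 (k c) = g c) -> (forall c, p2 (k c) = h c) ->
  has_lift (sl C) (sr C) (sl S) (sr S) g -> has_lift (sl C) (sr C) (sl T) (sr T) h ->
  has_lift (sl C) (sr C) lP rP k.
Proof.
  intros Hk1 Hk2 [gt Hgt] [ht Hht].
  destruct (proj2 (related_pullback_iff (esmap_comp k (sl C)) (esmap_comp k (sr C))))
    as [K HK].
  - split; [exists gt | exists ht]; intro c; simpl; rewrite ?Hk1, ?Hk2; [apply Hgt | apply Hht].
  - exists K. intro e. apply HK.
Qed.

End PullbackOfSymmetries.

Theorem mainTheorem10
  (A S T : ESSP)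
  (sg : esmap S A) (sgt : esmap (symE S) (symE A))
  (tau : esmap T (dual A)) (taut : esmap (symE T) (symE (dual A)))
  (Hsg : pre_strategy sg sgt) (Hsg_c : courteous sg) (Hsg_r : strong_receptive sg)
  (Htau : pre_strategy tau taut) (Htau_c : courteous tau) (Htau_r : strong_receptive tau)
  (P : ES) (p1 : esmap P S) (p2 : esmap P T)
  (HP : is_pullback (Z := base A) sg tau p1 p2)
  (Pt : ES) (q1 : esmap Pt (symE S)) (q2 : esmap Pt (symE T))
  (HPt : is_pullback (Z := symE A) sgt taut q1 q2)
  (lP rP : esmap Pt P)
  (HlP : forall e, p1 (lP e) = sl S (q1 e) /\ p2 (lP e) = sl T (q2 e))
  (HrP : forall e, p1 (rP e) = sr S (q1 e) /\ p2 (rP e) = sr T (q2 e)) :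
  ess_pullback (A := A) sg tau lP rP p1 p2 /\
  lifts lP rP (sl S) (sr S) p1 q1 /\ lifts lP rP (sl T) (sr T) p2 q2.
Proof.
  pose proof (lifts_p1 HlP HrP) as Hq1.
  pose proof (lifts_p2 HlP HrP) as Hq2.
  split; [|split; assumption].
  split; [exact (pullback_is_symmetry Hsg Hsg_r Htau Htau_r HP HPt HlP HrP)|].
  split; [exists q1; exact Hq1|].
  split; [exists q2; exact Hq2|].
  split; [exact (proj1 HP)|].
  intros C g h Hg Hh Hgh.
  destruct (proj2 HP C g h Hgh) as [k [[Hk1 Hk2] Hk_uniq]].
  exists k. split.
  - split; [exact (pullback_mediating_lifts Hsg Htau HP HPt HlP HrP Hk1 Hk2 Hg Hh) | auto].
  - intros k' _. apply Hk_uniq.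
Qed.
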